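(* Consider $N\ge2$ agents $V=\{1,\dots,N\}$ with states $\mathbf x(t)\in\mathbb{R}^N$ evolving according to $$\dot{\mathbf x}(t)=-L(t)\mathbf x(t)+\mathbf u(t),$$ i.e. $\dot x_i=\sum_{j\in\mathcal N_i}|a_{ij}(t)|(\operatorname{sgn}(a_{ij}(t))x_j-x_i)+u_i$, over a time-varying signed interaction graph $\mathcal G_A(t)$ that is uniformly quasi strongly $\delta$-connected (with constant $T>0$) and whose coefficients satisfy (A1)–(A3) below. Suppose that for every $t\ge0$ the union graph $G_\delta[t,t+T)$ contains a fixed node set $S\subseteq V$ that forms a root node set (there is a $\delta$-path in $G_\delta[t,t+T)$ from $S$ to every other node), and that the subgraph induced by $S$ is persistently structurally balanced. Let $\mathbf x_d\in\mathbb{R}^N$ be any desired state and apply the control input $$\mathbf u(t)=L(t)\mathbf x_d-K(t)\bigl(\mathbf x(t)-\mathbf x_d\bigr),\qquad K(t)=\operatorname{diag}(k_1(t),\dots,k_N(t)),$$ where (P1) each $k_i(\cdot)$ is continuous for almost all $t\ge t_0$ (its discontinuities form a set of Lebesgue measure zero), and (P2) there exists $\underline\kappa>0$ such that $k_i(t)\in[\underline\kappa,\infty)$ for $i\in S$ and $k_j(t)\equiv0$ for $j\notin S$, for all $t\ge t_0$. Then the closed-loop system achieves the desired steady state: $\mathbf x(t)\to\mathbf x_d$ as $t\to\infty$.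
   Context: $t_0\ge0$ is the initial time. $\operatorname{sgn}$ is the sign function; $a_{ij}(t)\in\mathbb{R}$ is the signed influence of agent $j$ on agent $i$; $\mathcal N_i$ is the set of incoming neighbors of $i$. $L(t)$ is the signed Laplacian: $[L(t)]_{ii}=\sum_{k\in\mathcal N_i}|a_{ik}(t)|$, $[L(t)]_{ij}=-a_{ij}(t)$ for $i\neq j$. Solutions are understood in the Carathéodory (absolutely continuous) sense. Assumptions: (A1) each $a_{ij}(t)$ is piecewise continuous on every compact interval with discontinuity set of Lebesgue measure zero; (A2) $a_{ii}\equiv0$; (A3) there is $M_0>0$ with $\int_{t_1}^{t_2}|a_{ij}(s)|\,ds\le M_0(t_2-t_1)$ for all $t_1\le t_2$. Graph notions: for $\delta>0$, a $\delta$-arc from $j$ to $i$ on $[t_1,t_2)$ means $\int_{t_1}^{t_2}|a_{ij}(t)|\,dt\ge\delta(t_2-t_1)$; a $\delta$-path on $[t_1,t_2)$ is a directed path of $\delta$-arcs on $[t_1,t_2)$; $G_\delta[t_1,t_2)$ is the digraph on $V$ whose arcs are the $\delta$-arcs on $[t_1,t_2)$, and $G_\delta^\infty$ is the union of all $\delta$-arcs appearing over $[0,\infty)$; condensation graphs have strongly connected components (SCCs) as nodes, and an SCC is closed if it has no incoming arcs from other SCCs. $\mathcal G_A(t)$ is uniformly quasi strongly $\delta$-connected if there is $T>0$ such that for every $t\ge0$ the condensation graph of $G_\delta[t,t+T)$ has a root node with a $\delta$-path to every other node. Persistent structural balance: when $\mathcal G_A(t)$ is uniformly quasi strongly $\delta$-connected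 and the condensation graph of $G_\delta^\infty$ contains a fixed node set $S$ forming a closed SCC, this SCC is persistently structurally balanced if for all $t\ge0$ there exists a unique bipartition $S=V_1^s\cup V_2^s$, $V_1^s\cap V_2^s=\varnothing$, such that $a_{jk}(t)\ge0$ whenever $j,k$ lie in the same part and $a_{jk}(t)\le0$ whenever $j,k$ lie in different parts. *)

From HB Require Import structures.
From mathcomp Require Import all_boot all_order all_algebra.
From mathcomp Require Import all_classical all_reals all_analysis.
Set Implicit Arguments. Unset Strict Implicit. Unset Printing Implicit Defensive.
Import Order.TTheory GRing.Theory Num.Theory.
Import numFieldNormedType.Exports.
Local Open Scope classical_set_scope.
Local Open Scope ring_scope.

Section SignedNetwork.
Variables (R : realType) (N : nat).

(* a i j t : signed influence of agent j on agent i at time t *)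
Implicit Types (a : 'I_N -> 'I_N -> R -> R) (k : 'I_N -> R -> R).

Local Notation mu := (@lebesgue_measure R).

Definition A1 a : Prop :=
  forall i j : 'I_N,
    mu.-negligible [set t : R | 0 <= t /\ ~ {for t, continuous (a i j)}].

Definition A2 a : Prop := forall (i : 'I_N) (t : R), a i i t = 0.

Definition A3 a : Prop :=
  exists M0 : R, 0 < M0 /\
    forall (i j : 'I_N) (t1 t2 : R), 0 <= t1 -> t1 <= t2 ->
      (\int[mu]_(s in `[t1, t2[) (`|a i j s|)%:E <= (M0 * (t2 - t1))%:E)%E.

Definition delta_arc a (delta t1 t2 : R) (j i : 'I_N) : Prop :=
  (\int[mu]_(s in `[t1, t2[) (`|a i j s|)%:E >= (delta * (t2 - t1))%:E)%E.

Inductive dpath (E : 'I_N -> 'I_N -> Prop) : 'I_N -> 'I_N -> Prop :=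
| dpath_refl x : dpath E x x
| dpath_step x y z : dpath E x y -> E y z -> dpath E x z.

Definition delta_path a (delta t1 t2 : R) (j i : 'I_N) : Prop :=
  dpath (delta_arc a delta t1 t2) j i.

(* uniformly quasi strongly delta-connected with constant T: for every
   t >= 0 the condensation graph of G_delta[t,t+T) has a root node (an SCC)
   with a delta-path to every other node, i.e. some node r of G_delta[t,t+T)
   has a delta-path to every node *)
Definition uqs_connected a (delta T : R) : Prop :=
  0 < T /\ forall t : R, 0 <= t ->
    exists r : 'I_N, forall v : 'I_N, delta_path a delta t (t + T) r v.

Definition root_node_set a (delta T : R) (S : {set 'I_N}) : Prop :=
  forall t : R, 0 <= t -> forall v : 'I_N,
    exists2 r : 'I_N, r \in S & delta_path a delta t (t + T) r v.

Definition balanced_bipartition a (S V1 : {set 'I_N}) (t : R) : Prop :=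
  V1 \subset S /\
  forall j k : 'I_N, j \in S -> k \in S ->
    (((j \in V1) = (k \in V1)) -> 0 <= a j k t) /\
    (((j \in V1) <> (k \in V1)) -> a j k t <= 0).

(* persistent structural balance of the subgraph induced by S: for all t >= 0
   there is a unique (unordered) bipartition {V1, V2} of S *)
Definition persistently_balanced a (S : {set 'I_N}) : Prop :=
  forall t : R, 0 <= t ->
    exists V1 : {set 'I_N}, balanced_bipartition a S V1 t /\
      forall W1 : {set 'I_N}, balanced_bipartition a S W1 t ->
        W1 = V1 \/ W1 = S :\: V1.

Definition signed_laplacian a (t : R) : 'M[R]_N :=
  \matrix_(i, j) (if i == j then \sum_(l < N) `|a i l t| else - a i j t).

Definition gain_matrix k (t : R) : 'M[R]_N := diag_mx (\row_i k i t).

Definition control a k (xd : 'cV[R]_N) (x : R -> 'cV[R]_N) (t : R) : 'cV[R]_N :=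
  signed_laplacian a t *m xd - gain_matrix k t *m (x t - xd).

Definition closed_loop_rhs a k (xd : 'cV[R]_N) (x : R -> 'cV[R]_N) (t : R)
  : 'cV[R]_N :=
  - (signed_laplacian a t *m x t) + control a k xd x t.

Definition caratheodory_solution a k (xd : 'cV[R]_N) (t0 : R)
  (x : R -> 'cV[R]_N) : Prop :=
  forall (t : R) (i : 'I_N), t0 <= t ->
    mu.-integrable `[t0, t] (fun s => (closed_loop_rhs a k xd x s i ord0)%:E) /\
    x t i ord0 = x t0 i ord0 +
      Rintegral mu `[t0, t] (fun s => closed_loop_rhs a k xd x s i ord0).

Definition P1 k (t0 : R) : Prop :=
  forall i : 'I_N,
    mu.-negligible [set t : R | t0 <= t /\ ~ {for t, continuous (k i)}].

Definition P2 k (S : {set 'I_N}) (t0 : R) : Prop :=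
  exists kappa : R, 0 < kappa /\
    forall (t : R) (i : 'I_N), t0 <= t ->
      (i \in S -> kappa <= k i t) /\ (i \notin S -> k i t = 0).

End SignedNetwork.

(* The error [e = x - xd] obeys [e' = -(L + K) e], i.e.
   [e_i' = sum_l |a_il| (sgn(a_il) e_l - e_i) - k_i e_i], so at a node where
   [|e_i|] is maximal every coupling term pulls [|e_i|] down: the maximum norm
   [m] never increases.  A node whose error is [theta] below [m] loses at most
   half of this gap on each window of length [1 / (2 D + 2)], where [D] bounds
   the total coupling.  On a window of length [T] a pinned node
   ([k_i >= kappa]) is driven below [m], and so is the head of a delta-arc
   whose tail is already below [m]; since [S] reaches every node by
   delta-paths in each window, after [N] windows all errors are below
   [(1 - c) m] for a fixed [c > 0], whence geometric convergence. *)

From HB Require Import structures.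
From mathcomp Require Import all_boot all_order all_algebra.
From mathcomp Require Import all_classical all_reals all_analysis.
From mathcomp Require Import ring lra measurable_realfun.
Set Implicit Arguments. Unset Strict Implicit. Unset Printing Implicit Defensive.
Import Order.TTheory GRing.Theory Num.Theory.
Import numFieldNormedType.Exports.
Import HBNNSimple.
Local Open Scope classical_set_scope.
Local Open Scope ring_scope.

Section RealFunctions.
Variable R : realType.
Implicit Types (f phi : R -> R) (u v c beta : R).

Lemma normr_le_sign (x b : R) : (forall sg : R, `|sg| = 1 -> sg * x <= b) -> `|x| <= b.
Proof.
move=> signed; have := signed 1 (normr1 _); have := signed (-1) (normrN1 _).
rewrite ler_norml; lra.
Qed.

Lemma sign_mul_le_normr (sg x : R) : `|sg| = 1 -> sg * x <= `|x|.
Proof. by move=> sg1; apply: le_trans (ler_norm _) _; rewrite normrM sg1 mul1r. Qed.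

Lemma continuous_within_itv_dist f u v x eps :
  {within `[u, v], continuous f} -> u <= x <= v -> 0 < eps ->
  exists2 d, 0 < d & forall y, u <= y <= v -> `|x - y| < d -> `|f x - f y| < eps.
Proof.
move=> /subspace_continuousP cf xuv eps0.
have xin : [set` `[u, v]] x by rewrite /= in_itv.
move: (cf x xin) => /cvgrPdist_lt /(_ _ eps0).
rewrite near_withinE => /nbhs_ballP [d d0 near_x].
exists d => // y yuv xy; apply: near_x; last by rewrite /= in_itv.
by rewrite -ball_normE.
Qed.

(* The hypothesis is only used at the last time [s] with [phi s <= c], or at
   [u] if there is none. *)
Lemma le_max_last_crossing phi u v c beta :
  u <= v -> {within `[u, v], continuous phi} -> 0 <= beta ->
  (forall s, u <= s <= v -> (forall t, s < t <= v -> c < phi t) -> phi v - phi s <= beta) ->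
  phi v <= Num.max (phi u) c + beta.
Proof.
move=> uv cphi beta0 growth.
have [vc|cv] := leP (phi v) c.
  by apply: le_trans vc _; rewrite -[leLHS]addr0 lerD // le_max lexx orbT.
pose E := [set t | u <= t <= v /\ phi t <= c].
have [[t1 Et1]|E0] := pselect (exists t, E t); last first.
  have above t : u < t <= v -> c < phi t.
    move=> /andP[ut tv]; rewrite ltNge; apply/negP => tc; apply: E0.
    by exists t; rewrite /E /= (ltW ut) tv.
  have uuv : u <= u <= v by rewrite lexx uv.
  have := growth u uuv above.
  have : phi u <= Num.max (phi u) c by rewrite le_max lexx.
  lra.
have supE : has_sup E by split; [exists t1 | exists v => t [/andP[_ ->]]].
set s := sup E.
have us : u <= s.
  by have [/andP[ut1 _] _] := Et1; apply: le_trans ut1 (sup_upper_bound supE Et1).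
have sv : s <= v by apply: ge_sup; [exists t1 | move=> t [/andP[_ ->]]].
have above t : s < t <= v -> c < phi t.
  move=> /andP[st tv]; rewrite ltNge; apply/negP => tc.
  have Et : E t by split => //; rewrite tv andbT (le_trans us) // ltW.
  by have := sup_upper_bound supE Et; rewrite leNgt st.
have usv : u <= s <= v by rewrite us sv.
have sc : phi s <= c.
  rewrite leNgt; apply/negP => cs.
  have gap : 0 < phi s - c by rewrite subr_gt0.
  have [d d0 close] := continuous_within_itv_dist cphi usv gap.
  have [y [yuv yc]] := sup_adherent d0 supE; rewrite -/s => sdy.
  have ys : y <= s := sup_upper_bound supE (conj yuv yc).
  have sy : `|s - y| < d by rewrite ger0_norm ?subr_ge0 //; lra.
  have := le_lt_trans (ler_norm _) (close y yuv sy); lra.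
have := growth s usv above.
have : c <= Num.max (phi u) c by rewrite le_max lexx orbT.
lra.
Qed.

Lemma continuous_sign_persistence phi u v c :
  u <= v -> {within `[u, v], continuous phi} -> 0 <= c ->
  (forall t, u <= t <= v -> c < `|phi t|) ->
  exists2 sg : R, `|sg| = 1 & forall t, u <= t <= v -> c < sg * phi t.
Proof.
move=> uv cphi c0 above.
pose sg : R := if 0 <= phi u then 1 else -1.
have sg1 : `|sg| = 1 by rewrite /sg; case: ifP; rewrite ?normrN normr1.
have sgu : sg * phi u = `|phi u|.
  by rewrite /sg; case: ifPn => [/ger0_norm ->|]; rewrite ?mul1r // -ltNge mulN1r => /ltr0_norm.
have sgn s : `|sg * phi s| = `|phi s| by rewrite normrM sg1 mul1r.
exists sg => // t /andP[ut tv].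
have utv : u <= t <= v by rewrite ut tv.
have := above t utv; rewrite -sgn.
rewrite ltr_normr => /orP[//|ct]; exfalso.
have csg : {within `[u, t], continuous (fun s => sg * phi s)}.
  move=> s; apply: continuousM; first exact: cst_continuous.
  apply: (continuous_subspaceW _ cphi) => r /=; rewrite !in_itv /= => /andP[-> rt].
  by rewrite (le_trans rt).
have uuv : u <= u <= v by rewrite lexx uv.
have [|r] := IVT ut csg (v := 0).
  by have := above u uuv; rewrite -sgu ge_min le_max; lra.
rewrite in_itv /= => /andP[ur rt] r0.
have urv : u <= r <= v by rewrite ur (le_trans rt).
by have := above r urv; rewrite -sgn r0 normr0; lra.
Qed.

Lemma window_induction (P : nat -> R -> Prop) u h :
  0 <= h -> P 0%N u -> (forall n t, P n t -> P n.+1 t) ->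
  (forall n, (forall t, u <= t <= u + n%:R * h -> P n t) ->
     forall t, u + n%:R * h <= t <= u + n.+1%:R * h -> P n.+1 t) ->
  forall n t, u <= t <= u + n%:R * h -> P n t.
Proof.
move=> h0 P0 Pmono Pstep; elim=> [|n IH] t.
  by rewrite mul0r addr0 => /andP[ut tu]; have -> : t = u by apply/le_anti; rewrite tu ut.
move=> /andP[ut tn]; have [tle|tgt] := leP t (u + n%:R * h).
  by apply/Pmono/IH; rewrite ut tle.
by apply: (Pstep n IH); rewrite (ltW tgt) tn.
Qed.

Lemma exists_nat_mul_ge (x h : R) : 0 < h -> exists n : nat, x <= n%:R * h.
Proof.
move=> h0; exists (Num.bound (Num.max x 0 / h)).
rewrite -ler_pdivrMr //; apply: le_trans (ltW (archi_boundP _)).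
  by rewrite ler_pM2r ?invr_gt0 // le_max lexx.
by rewrite divr_ge0 ?le_max ?lexx ?orbT // ltW.
Qed.

(* [theta = eta * recovery_rate D x L] balances, over a window of length [L],
   the slack [theta] plus the coupling loss [D theta L] against a pull of
   strength [x (eta - theta)]: [theta (1 + D L) = (eta - theta) x L]. *)
Definition recovery_rate (D x L : R) := x * L / (1 + D * L + x * L).

Lemma recovery_rateP (D x L : R) : 0 <= D -> 0 < x -> 0 < L ->
  [/\ 0 < recovery_rate D x L, recovery_rate D x L <= 1 &
      recovery_rate D x L * (1 + D * L + x * L) = x * L].
Proof.
move=> D0 x0 L0; have xL : 0 < x * L by exact: mulr_gt0.
have DL : 0 <= D * L by rewrite mulr_ge0 // ltW.
have den : 0 < 1 + D * L + x * L by lra.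
split; first by rewrite divr_gt0.
  by rewrite ler_pdivrMr // mul1r; lra.
by rewrite /recovery_rate mulfVK // gt_eqF.
Qed.

End RealFunctions.

Lemma dpath_exit (N : nat) (E : 'I_N -> 'I_N -> Prop) (A : {set 'I_N}) x y :
  dpath E x y -> x \in A -> y \notin A -> exists y' z, [/\ y' \in A, z \notin A & E y' z].
Proof.
elim=> [x' -> //|x' y' z _ IH yz] xA zA.
by case: (boolP (y' \in A)) => [y'A|/IH]; [exists y', z | apply].
Qed.

Section IntervalIntegrals.
Variable R : realType.
Local Notation mu := (@lebesgue_measure R).

Lemma lebesgue_measure_itv_len (b1 b2 : bool) (s v : R) : s <= v ->
  mu [set` Interval (BSide b1 s) (BSide b2 v)] = (v - s)%:E.
Proof.
move=> sv; rewrite lebesgue_measure_itv /=.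
case: ifPn => [_|]; first by rewrite -EFinD.
have [<-|sv'] := eqVneq s v; first by rewrite subrr.
by rewrite lte_fin lt_neqAle sv' sv.
Qed.

Lemma integrable_itv_cst (s v c : R) : mu.-integrable `]s, v] (EFin \o cst c).
Proof.
apply/integrableP; split; first exact/measurable_EFinP/measurable_cst.
rewrite (eq_integral (cst `|c|%:E)) // integral_cst //= lebesgue_measure_itv /=.
by case: ifP => _; rewrite ?mule0 ?ltry // -EFinD -EFinM ltry.
Qed.

Lemma Rintegral_itv_cst (s v c : R) : s <= v -> \int[mu]_(t in `]s, v]) c = c * (v - s).
Proof.
move=> sv; rewrite Rintegral_cst //; congr (c * _).
by rewrite -[RHS]/(fine (v - s)%:E); congr fine; exact: lebesgue_measure_itv_len.
Qed.

Lemma integrable_itv_cst_subZ (s v c r : R) (w : R -> R) :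
  mu.-integrable `]s, v] (EFin \o w) ->
  mu.-integrable `]s, v] (EFin \o (fun t => c - r * w t)).
Proof.
move=> wi.
have rwi : mu.-integrable `]s, v] (fun t => (r%:E * (EFin \o w) t)%E) by exact: integrableZl.
by apply: eq_integrable (integrableB _ (integrable_itv_cst s v c) rwi) => // t _ /=;
  rewrite EFinB EFinM.
Qed.

Lemma Rintegral_itv_cst_subZ (s v c r : R) (w : R -> R) : s <= v ->
  mu.-integrable `]s, v] (EFin \o w) ->
  \int[mu]_(t in `]s, v]) (c - r * w t) = c * (v - s) - r * \int[mu]_(t in `]s, v]) w t.
Proof.
move=> sv wi; rewrite RintegralB ?Rintegral_itv_cst ?RintegralZl //.
  exact: integrable_itv_cst.
have rwi : mu.-integrable `]s, v] (fun t => (r%:E * (EFin \o w) t)%E) by exact: integrableZl.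
by apply: eq_integrable rwi => // t _ /=; rewrite EFinM.
Qed.

Lemma Rintegral_setD_null (D Z : set R) (f : R -> R) :
  measurable (D : set (measurableTypeR R)) -> measurable (Z : set (measurableTypeR R)) ->
  mu Z = 0%E -> mu.-integrable D (EFin \o f) ->
  \int[mu]_(t in D) f t = \int[mu]_(t in D `\` Z) f t.
Proof. by move=> mD mZ Z0 fi; rewrite /Rintegral (negligible_integral mZ mD fi Z0). Qed.

(* Unlike [ge0_le_integral], no measurability is required (the couplings are
   not assumed measurable): the nonnegative integral is a supremum over simple
   minorants. *)
Lemma ge0_le_integral_nonmeasurable (D : set R) (f1 f2 : R -> \bar R) :
  (forall x, D x -> (0 <= f1 x)%E) -> (forall x, D x -> (f1 x <= f2 x)%E) ->
  (\int[mu]_(x in D) f1 x <= \int[mu]_(x in D) f2 x)%E.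
Proof.
move=> f10 f12.
have f20 x : D x -> (0 <= f2 x)%E by move=> Dx; exact: le_trans (f10 x Dx) (f12 x Dx).
rewrite !ge0_integralE //; apply: ereal_sup_le => _ [h hle <-]; exists h => // x.
apply: (le_trans (hle x)); rewrite /patch; case: ifP => // /set_mem Dx.
exact: f12.
Qed.

Lemma norm_le_of_mean_le (f : R -> R) (t M : R) : 0 <= M -> {for t, continuous f} ->
  (forall v, t <= v -> (\int[mu]_(s in `[t, v[) (`|f s|)%:E <= (M * (v - t))%:E)%E) ->
  `|f t| <= M.
Proof.
move=> M0 cf mean; rewrite leNgt; apply/negP => Mf.
have eps0 : 0 < (`|f t| - M) / 2 by rewrite divr_gt0 // subr_gt0.
move: cf => /cvgrPdist_lt /(_ _ eps0) /nbhs_ballP [d d0 near_t].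
have d2 : 0 < d / 2 by exact: divr_gt0.
pose v := t + d / 2; have vE : v = t + d / 2 by [].
have above s : [set` `[t, v[] s -> (`|f t| + M) / 2 <= `|f s|.
  rewrite /= in_itv /= => /andP[ts sd].
  have : ball t d s by rewrite -ball_normE /ball_ /= ler0_norm ?subr_le0 //; lra.
  move=> /near_t /= fts.
  have := le_trans (ler_norm _) (ler_dist_dist (f t) (f s)); lra.
have lower : (((`|f t| + M) / 2 * (d / 2))%R%:E <=
    \int[mu]_(s in `[t, v[) (`|f s|)%:E)%E.
  apply: le_trans (ge0_le_integral_nonmeasurable (f1 := cst ((`|f t| + M) / 2)%R%:E) _ _).
  - rewrite integral_cst // EFinM le_eqVlt; apply/orP; left; apply/eqP.
    congr (_ * _)%E; rewrite -[d / 2](addKr t) addrC -vE; apply/esym.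
    by apply: lebesgue_measure_itv_len; lra.
  - by move=> s _; rewrite lee_fin; lra.
  - by move=> s /above; rewrite lee_fin.
have tv : t <= v by lra.
have := le_trans lower (mean _ tv); rewrite lee_fin vE addrAC subrr add0r.
by rewrite ler_pM2r //; lra.
Qed.

Lemma exists_integrable_minorant (f : R -> R) (t v beta : R) : (forall s, 0 <= f s) ->
  (beta%:E < \int[mu]_(s in `[t, v[) (f s)%:E)%E ->
  (\int[mu]_(s in `[t, v[) (f s)%:E < +oo)%E ->
  exists h : R -> R, [/\ forall s, 0 <= h s <= f s,
    mu.-integrable `]t, v] (EFin \o h) & beta <= \int[mu]_(s in `]t, v]) h s].
Proof.
move=> f0 lower upper.
have f0' x : [set` `[t, v[] x -> (0 <= (f x)%:E)%E by move=> _; rewrite lee_fin.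
rewrite ge0_integralE // in lower upper.
have [y [h hf hy] betay] := ereal_sup_gt lower.
have yf : (y <= \int[mu]_(s in `[t, v[) (f s)%:E)%E.
  by rewrite ge0_integralE //; apply: ereal_sup_ubound; exists h.
have hle s : h s <= f s.
  have := hf s; rewrite /patch; case: ifP => _; rewrite lee_fin // => hs0.
  exact: le_trans hs0 (f0 s).
have hout s : ~ [set` `[t, v[] s -> h s = 0.
  move=> ns; have := hf s; rewrite /patch ifF; last by apply/negbTE/negP; rewrite inE.
  by rewrite lee_fin => hs0; apply/le_anti; rewrite hs0 fun_ge0.
have intT : (\int[mu]_(s in setT) (h s)%:E = y)%E by rewrite integral_nnsfun // patch_setT.
have y0 : (0 <= y)%E by rewrite -hy sintegral_ge0.
have yfin : y \is a fin_num.
  by rewrite ge0_fin_numE //; apply: le_lt_trans upper; rewrite -ge0_integralE.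
have hint : mu.-integrable `]t, v] (EFin \o h).
  apply/integrableP; split; first exact/measurable_funTS/measurable_EFinP.
  rewrite (eq_integral (fun s => (h s)%:E)); last by move=> s _ /=; rewrite ger0_norm.
  apply: (@le_lt_trans _ _ (\int[mu]_(s in setT) (h s)%:E)%E).
    apply: ge0_subset_integral => //; first exact/measurable_EFinP.
    by move=> s _; rewrite lee_fin.
  by rewrite intT -ge0_fin_numE.
exists h; split => //; first by move=> s; rewrite fun_ge0 hle.
rewrite Rintegral_itv_obnd_cbnd // /Rintegral.
have -> : (\int[mu]_(s in `[t, v]) (h s)%:E = \int[mu]_(s in setT) (h s)%:E)%E.
  rewrite integral_mkcond; apply: eq_integral => s _; rewrite /patch; case: ifP => // hs.
  rewrite hout // => /= hs'; move/negbT: hs; move/negP; apply; rewrite inE /= in_itv /=.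
  by move: hs'; rewrite in_itv /= => /andP[-> /ltW ->].
by rewrite intT; move: betay; rewrite -(fineK yfin) lte_fin => /ltW.
Qed.

End IntervalIntegrals.

Section NegligibleUnion.
Context d (T : measurableType d) (R : realType) (mu : {measure set T -> \bar R}).

Lemma negligible_finite_union (I : finType) (A : I -> set T) :
  (forall i, mu.-negligible (A i)) -> mu.-negligible [set x | exists i, A i x].
Proof.
move=> negA.
suff : forall s : seq I, mu.-negligible [set x | exists2 i, i \in s & A i x].
  by move/(_ (enum I)); apply: negligibleS => x [i Ai]; exists i; rewrite ?mem_enum.
elim=> [|i s IH]; first by apply: negligibleS (negligible_set0 _) => x [].
apply: negligibleS (negligibleU (negA i) IH) => x [j].
by rewrite in_cons => /orP[/eqP-> | js] Aj; [left | right; exists j].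
Qed.

End NegligibleUnion.

(* [e] models the tracking error [x - xd], [g] its right-hand side, and [Z] a
   null set off which all couplings are bounded by [M0]. *)
Section ErrorDynamics.
Variables (R : realType) (N : nat).
Local Notation mu := (@lebesgue_measure R).
Variables (a : 'I_N -> 'I_N -> R -> R) (k e g : 'I_N -> R -> R) (t0 M0 : R) (Z : set R).
Hypothesis M0_ge0 : 0 <= M0.
Hypothesis Z_measurable : measurable (Z : set (measurableTypeR R)).
Hypothesis Z_null : mu Z = 0%E.
Hypothesis a_bounded : forall t, t0 <= t -> ~ Z t -> forall i l, `|a i l t| <= M0.
Hypothesis k_ge0 : forall i t, t0 <= t -> 0 <= k i t.
Hypothesis gE : forall i t,
  g i t = - (\sum_l `|a i l t|) * e i t + \sum_l a i l t * e l t - k i t * e i t.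
Hypothesis g_integrable : forall i t, t0 <= t -> mu.-integrable `[t0, t] (EFin \o g i).
Hypothesis e_integral : forall i t, t0 <= t ->
  e i t = e i t0 + \int[mu]_(s in `[t0, t]) g i s.

Lemma e_continuous i u v : t0 <= u -> u <= v -> {within `[u, v], continuous (e i)}.
Proof.
move=> t0u uv; have t0v := le_trans t0u uv.
have cI := parameterized_integral_continuous t0v (g_integrable i t0v).
have ce : {within `[t0, v], continuous (e i)}.
  apply: subspace_eq_continuous (fun x => continuousD (@cst_continuous _ _ (e i t0) x) (cI x)).
  by move=> t; rewrite inE /= in_itv /= => /andP[t0t _]; exact/esym/e_integral.
apply: continuous_subspaceW ce => t /=; rewrite !in_itv /= => /andP[ut ->].
by rewrite (le_trans t0u ut).
Qed.

Lemma g_integrable_itv i s v : t0 <= s -> s <= v -> mu.-integrable `]s, v] (EFin \o g i).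
Proof.
move=> t0s sv; apply: integrableS (g_integrable i (le_trans t0s sv)) => //.
by move=> t /=; rewrite !in_itv /= => /andP[st ->]; rewrite andbT (le_trans t0s) // ltW.
Qed.

Lemma e_increment i sg s v : t0 <= s -> s <= v ->
  sg * (e i v - e i s) = \int[mu]_(t in `]s, v]) (sg * g i t).
Proof.
move=> t0s sv; have t0v := le_trans t0s sv.
rewrite (e_integral i t0v) (e_integral i t0s) opprD addrACA subrr add0r.
rewrite (Rintegral_itvB (g_integrable i t0v)) ?bnd_simp // RintegralZl //.
exact: g_integrable_itv.
Qed.

Lemma e_increment_le i sg s v (F : R -> R) : t0 <= s -> s <= v ->
  mu.-integrable `]s, v] (EFin \o F) ->
  (forall t, s < t <= v -> ~ Z t -> sg * g i t <= F t) ->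
  sg * (e i v - e i s) <= \int[mu]_(t in `]s, v]) F t.
Proof.
move=> t0s sv Fi gF; rewrite e_increment //.
have gi : mu.-integrable `]s, v] (EFin \o (fun t => sg * g i t)).
  have : mu.-integrable `]s, v] (fun t => (sg%:E * (EFin \o g i) t)%E).
    exact/integrableZl/g_integrable_itv.
  by apply: eq_integrable => // t _ /=; rewrite EFinM.
rewrite (Rintegral_setD_null _ Z_measurable Z_null gi) //.
rewrite (Rintegral_setD_null _ Z_measurable Z_null Fi) //.
apply: le_Rintegral; first exact: measurableD.
- by apply: integrableS gi => //; exact: measurableD.
- by apply: integrableS Fi => //; exact: measurableD.
by move=> t [/=]; rewrite in_itv /=; apply: gF.
Qed.

Lemma e_increment_le_cst i sg s v G : t0 <= s -> s <= v ->
  (forall t, s < t <= v -> ~ Z t -> sg * g i t <= G) -> sg * (e i v - e i s) <= G * (v - s).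
Proof.
move=> t0s sv gG; rewrite -[G * _]Rintegral_itv_cst //.
exact: (e_increment_le (F := fun=> G) t0s sv (integrable_itv_cst _ _ _) gG).
Qed.

Let D := M0 *+ N.

Let D_ge0 : 0 <= D. Proof. exact: mulrn_wge0. Qed.

Lemma sum_abs_le_D i t : t0 <= t -> ~ Z t -> \sum_l `|a i l t| <= D.
Proof.
move=> t0t Zt; rewrite /D -[N in M0 *+ N]card_ord -sumr_const.
by apply: ler_sum => l _; exact: a_bounded.
Qed.

Lemma signed_rhs_le i sg t : `|sg| = 1 ->
  sg * g i t <= \sum_l `|a i l t| * (`|e l t| - sg * e i t) - k i t * (sg * e i t).
Proof.
move=> sg1.
have coupling : sg * (\sum_l a i l t * e l t) <= \sum_l `|a i l t| * `|e l t|.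
  rewrite mulr_sumr; apply: ler_sum => l _.
  by apply: le_trans (ler_norm _) _; rewrite !normrM sg1 mul1r.
have -> : \sum_l `|a i l t| * (`|e l t| - sg * e i t) =
    \sum_l `|a i l t| * `|e l t| - (\sum_l `|a i l t|) * (sg * e i t).
  by rewrite mulr_suml -sumrB; apply: eq_bigr => l _; ring.
rewrite gE; lra.
Qed.

Lemma drift_le_pinned i t m theta kappa sg : t0 <= t -> ~ Z t -> `|sg| = 1 ->
  0 <= kappa -> kappa <= k i t -> (forall l, `|e l t| <= m) ->
  0 <= m - theta <= sg * e i t -> sg * g i t <= D * theta - kappa * (m - theta).
Proof.
move=> t0t Zt sg1 kappa0 kappak bounded /andP[gap0 near].
have theta0 : 0 <= theta.
  by have := le_trans near (sign_mul_le_normr _ sg1); have := bounded i; lra.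
apply: le_trans (signed_rhs_le i t sg1) _.
have coupling : \sum_l `|a i l t| * (`|e l t| - sg * e i t) <= D * theta.
  apply: (@le_trans _ _ (\sum_l `|a i l t| * theta)).
    by apply: ler_sum => l _; apply: ler_wpM2l => //; have := bounded l; lra.
  by rewrite -mulr_suml ler_wpM2r // sum_abs_le_D.
have pinning : kappa * (m - theta) <= k i t * (sg * e i t) by apply: ler_pM.
lra.
Qed.

Lemma drift_le_arc j i t m eta theta sg : t0 <= t -> ~ Z t -> `|sg| = 1 ->
  (forall l, `|e l t| <= m) -> `|e i t| <= m - eta -> 0 <= m - theta <= sg * e j t ->
  sg * g j t <= D * theta - eta * `|a j i t|.
Proof.
move=> t0t Zt sg1 bounded ei /andP[gap0 near].
have theta0 : 0 <= theta.
  by have := le_trans near (sign_mul_le_normr _ sg1); have := bounded j; lra.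
apply: le_trans (signed_rhs_le j t sg1) _.
have sumD := sum_abs_le_D j t0t Zt; rewrite (bigD1 i) //= in sumD.
rewrite (bigD1 i) //=.
have at_i : `|a j i t| * (`|e i t| - sg * e j t) <= `|a j i t| * theta - eta * `|a j i t|.
  by rewrite [eta * _]mulrC -mulrBr; apply: ler_wpM2l => //; lra.
have others : \sum_(l < N | l != i) `|a j l t| * (`|e l t| - sg * e j t)
    <= (\sum_(l < N | l != i) `|a j l t|) * theta.
  by rewrite mulr_suml; apply: ler_sum => l _; apply: ler_wpM2l => //; have := bounded l; lra.
have coupling : (`|a j i t| + \sum_(l < N | l != i) `|a j l t|) * theta <= D * theta.
  exact: ler_wpM2r.
have pinning : 0 <= k j t * (sg * e j t) by rewrite mulr_ge0 ?k_ge0 //; lra.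
rewrite mulrDl in coupling; lra.
Qed.

(* On a window of length [h0] the coupling moves a node by at most half of its
   slack (see [half_step]). *)
Let h0 := (2 * D + 2)^-1.

Let h0_gt0 : 0 < h0. Proof. by rewrite invr_gt0; have := D_ge0; lra. Qed.

Lemma D_window_le_half X y : 0 <= X -> 0 <= y <= h0 -> D * X * y <= X / 2.
Proof.
move=> X0 /andP[y0 yh0].
have Dh0 : D * h0 <= 2^-1.
  have : (2 * D + 2) * h0 = 1 by rewrite mulfV //; have := D_ge0; lra.
  have := h0_gt0; lra.
have : D * X * (h0 - y) >= 0 by rewrite !mulr_ge0 // subr_ge0.
have : X * (2^-1 - D * h0) >= 0 by rewrite mulr_ge0 // subr_ge0.
lra.
Qed.

Lemma half_step i u t c B : t0 <= u -> u <= t <= u + h0 -> 0 <= c <= B ->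
  `|e i u| <= c -> (forall q s, u <= s <= t -> `|e q s| <= B) -> `|e i t| <= (c + B) / 2.
Proof.
move=> t0u /andP[ut th0] /andP[c0 cB] eu bounded.
apply: normr_le_sign => sg sg1.
have drift s : u <= s <= t -> (forall r, s < r <= t -> c < sg * e i r) ->
    sg * e i t - sg * e i s <= D * (B - c) * (t - u).
  move=> /andP[us st] above; have t0s := le_trans t0u us.
  rewrite -mulrBr; apply: (@le_trans _ _ (D * (B - c) * (t - s))).
    apply: e_increment_le_cst => // r /andP[sr rt] Zr.
    have t0r : t0 <= r by rewrite (le_trans t0s) // ltW.
    have Br l : `|e l r| <= B by apply: bounded; rewrite (le_trans us (ltW sr)) rt.
    have srt : s < r <= t by rewrite sr rt.
    have gap : 0 <= B - (B - c) <= sg * e i r.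
      by have := above r srt; rewrite opprB addrC subrK c0 => /ltW.
    by have := drift_le_pinned t0r Zr sg1 (lexx 0) (k_ge0 i t0r) Br gap; rewrite mul0r subr0.
  by rewrite ler_wpM2l ?mulr_ge0 ?subr_ge0 // lerD2l lerN2.
have csg : {within `[u, t], continuous (fun s => sg * e i s)}.
  by move=> s; apply: continuousM; [exact: cst_continuous | exact: e_continuous].
have slack : D * (B - c) * (t - u) <= (B - c) / 2.
  have tu : 0 <= t - u <= h0 by apply/andP; split; lra.
  by apply: D_window_le_half; rewrite // subr_ge0.
have maxc : Num.max (sg * e i u) c = c.
  by apply/max_idPr; apply: le_trans (sign_mul_le_normr _ sg1) eu.
have := le_max_last_crossing ut csg _ drift; rewrite maxc.
have : 0 <= D * (B - c) * (t - u) by rewrite !mulr_ge0 ?subr_ge0.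
move=> nonneg /(_ nonneg); lra.
Qed.

Lemma max_norm_window u B : t0 <= u -> (forall q, `|e q u| <= B) ->
  forall q t, u <= t <= u + h0 -> `|e q t| <= B.
Proof.
move=> t0u eu p s hs.
have uh : u <= u + h0 by have := h0_gt0; lra.
have peak q : exists c, c \in `[u, u + h0] /\
    forall t, t \in `[u, u + h0] -> `|e q t| <= `|e q c|.
  have cnorm : {within `[u, u + h0], continuous (fun t => `|e q t|)}.
    by move=> t; apply: continuous_comp; [exact: e_continuous | exact: norm_continuous].
  by have [c ? ?] := EVT_max uh cnorm; exists c.
have [c cmax] := choice peak.
pose Bw := \big[Num.max/B]_q `|e q (c q)|.
have BBw : B <= Bw by exact: bigmax_ge_id.
have below q t : u <= t <= u + h0 -> `|e q t| <= Bw.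
  move=> ht; apply: le_trans (le_bigmax _ _ q); apply: (cmax q).2.
  by rewrite in_itv.
have B0 : 0 <= B by apply: le_trans (eu p).
have halved q t : u <= t <= u + h0 -> `|e q t| <= (B + Bw) / 2.
  move=> ht; have BBw' : 0 <= B <= Bw by rewrite B0 BBw.
  apply: (half_step t0u ht BBw' (eu q)) => q' r /andP[ur rt]; apply: below.
  by rewrite ur (le_trans rt); case/andP: ht.
have : Bw <= (B + Bw) / 2.
  apply: bigmax_le => [|q _]; first lra.
  by apply: halved; have := (cmax q).1; rewrite in_itv.
by have := below p s hs; lra.
Qed.

Lemma max_norm_nonincreasing u B : t0 <= u -> (forall q, `|e q u| <= B) ->
  forall q t, u <= t -> `|e q t| <= B.
Proof.
move=> t0u eu q t ut.
have [n tn] := exists_nat_mul_ge (t - u) h0_gt0.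
have utn : u <= t <= u + n%:R * h0 by rewrite ut; lra.
apply: (@window_induction _ (fun _ t => forall q, `|e q t| <= B) u h0 (ltW h0_gt0) eu
  _ _ n t utn) => // {utn tn}n IH s hs q'.
have uw : u <= u + n%:R * h0 by rewrite lerDl mulr_ge0 // ltW.
apply: (max_norm_window (le_trans t0u uw) (IH _ _)); first by rewrite uw lexx.
by move: hs; rewrite -natr1 mulrDl mul1r addrA.
Qed.

Lemma gap_decay s u i m theta : t0 <= s -> s <= u -> 0 <= theta ->
  (forall q, `|e q s| <= m) -> `|e i u| <= m - theta ->
  forall n t, u <= t <= u + n%:R * h0 -> `|e i t| <= m - theta / 2 ^+ n.
Proof.
move=> t0s su theta0 es eiu.
have t0u := le_trans t0s su.
have m_bound q t : u <= t -> `|e q t| <= m.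
  by move=> ut; exact: (max_norm_nonincreasing t0s es q (le_trans su ut)).
apply: window_induction (ltW h0_gt0) _ _ _ => [|n t|n IH t /andP[wt th]].
- by rewrite expr0 divr1.
- have gapn : 0 <= theta / 2 ^+ n by rewrite divr_ge0 // exprn_ge0.
  by rewrite exprS invfM mulrA; lra.
- have uw : u <= u + n%:R * h0 by rewrite lerDl mulr_ge0 // ltW.
  have eiw := IH (u + n%:R * h0) (ltac:(by rewrite uw lexx)).
  have gapn : 0 <= theta / 2 ^+ n by rewrite divr_ge0 // exprn_ge0.
  have tw : u + n%:R * h0 <= t <= u + n%:R * h0 + h0.
    by rewrite wt /=; move: th; rewrite -natr1 mulrDl mul1r addrA.
  have cm : 0 <= m - theta / 2 ^+ n <= m.
    by rewrite (le_trans (normr_ge0 _) eiw) /=; lra.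
  have bounded q r : u + n%:R * h0 <= r <= t -> `|e q r| <= m.
    by move=> /andP[wr _]; apply: m_bound; rewrite (le_trans uw wr).
  have := half_step (le_trans t0u uw) tw cm eiw bounded.
  by rewrite exprS invfM mulrA; lra.
Qed.

(* If [sg * e j] stayed above [m - theta] on the whole window, the drift
   would push it down by more than [theta]. *)
Lemma drift_gap j u L m eta alpha (w : R -> R) : t0 <= u -> 0 < L -> 0 < eta <= m ->
  0 < alpha -> (forall q, `|e q u| <= m) ->
  mu.-integrable `]u, u + L] (EFin \o w) -> alpha * L <= \int[mu]_(t in `]u, u + L]) w t ->
  (forall theta sg t, 0 <= theta <= eta -> `|sg| = 1 -> u < t <= u + L -> ~ Z t ->
     m - theta <= sg * e j t -> sg * g j t <= D * theta - (eta - theta) * w t) ->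
  exists2 t, u <= t <= u + L & `|e j t| <= m - eta * recovery_rate D alpha L.
Proof.
move=> t0u L0 /andP[eta0 etam] alpha0 eu wi wmass drift.
have [rate0 rate1 rateE] := recovery_rateP D_ge0 alpha0 L0.
set theta := eta * recovery_rate D alpha L.
have theta_eta : 0 <= theta <= eta.
  by apply/andP; split; [exact: mulr_ge0 (ltW eta0) (ltW rate0) | exact: ler_piMr (ltW eta0) rate1].
have [//|far] := pselect (exists2 t, u <= t <= u + L & `|e j t| <= m - theta).
have above t : u <= t <= u + L -> m - theta < `|e j t|.
  by move=> ht; rewrite ltNge; apply/negP => close; apply: far; exists t.
have uL : u <= u + L by lra.
have gap0 : 0 <= m - theta by lra.
have [sg sg1 sg_above] := continuous_sign_persistence uL (e_continuous (i := j) t0u uL) gap0 above.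
have descent : sg * (e j (u + L) - e j u) <= D * theta * L - (eta - theta) * (alpha * L).
  apply: le_trans (e_increment_le (F := fun t => D * theta - (eta - theta) * w t) t0u uL _ _) _.
  - exact: integrable_itv_cst_subZ.
  - move=> t /andP[ut tL] Zt; apply: drift => //; first by rewrite ut.
    by apply/ltW/sg_above; rewrite ltW.
  rewrite Rintegral_itv_cst_subZ // addrAC subrr add0r lerD2l lerN2.
  by rewrite ler_wpM2l // subr_ge0; case/andP: theta_eta.
have end_above := sg_above (u + L) (ltac:(by rewrite uL lexx)).
have start_below := le_trans (sign_mul_le_normr (e j u) sg1) (eu j).
have thetaE : theta * (1 + D * L + alpha * L) = eta * (alpha * L) by rewrite -mulrA rateE.
have : 0 < theta * (alpha * L) by apply: mulr_gt0; apply: mulr_gt0.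
rewrite mulrBr mulrBl in descent; nra.
Qed.

Variables (S : {set 'I_N}) (kappa T dl : R) (arc : R -> 'I_N -> 'I_N -> Prop).
Hypothesis kappa_gt0 : 0 < kappa.
Hypothesis T_gt0 : 0 < T.
Hypothesis dl_gt0 : 0 < dl.
Hypothesis k_pinned : forall i t, i \in S -> t0 <= t -> kappa <= k i t.
Hypothesis S_root : forall t, t0 <= t -> forall v, exists2 r, r \in S & dpath (arc t) r v.
Hypothesis arc_minorant : forall t y z, t0 <= t -> arc t y z ->
  exists h : R -> R, [/\ forall s, 0 <= h s <= `|a z y s|,
    mu.-integrable `]t, t + T] (EFin \o h) & dl * T <= \int[mu]_(s in `]t, t + T]) h s].

Lemma pinned_gap i u m : i \in S -> t0 <= u -> 0 < m -> (forall q, `|e q u| <= m) ->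
  exists2 t, u <= t <= u + T & `|e i t| <= m - m * recovery_rate D kappa T.
Proof.
move=> iS t0u m0 eu; have mm : 0 < m <= m by rewrite m0 lexx.
apply: (drift_gap (w := cst kappa) t0u T_gt0 mm kappa_gt0 eu (integrable_itv_cst _ _ _)).
  rewrite Rintegral_itv_cst; last by rewrite lerDl ltW.
  by rewrite addrAC subrr add0r.
move=> theta sg t /andP[theta0 thetam] sg1 /andP[ut tT] Zt near.
have t0t : t0 <= t by rewrite (le_trans t0u) // ltW.
have bounded l : `|e l t| <= m by apply: (max_norm_nonincreasing t0u eu); exact: ltW.
have gap : 0 <= m - theta <= sg * e i t by rewrite subr_ge0 thetam.
have := drift_le_pinned t0t Zt sg1 (ltW kappa_gt0) (k_pinned iS t0t) bounded gap.
by rewrite [kappa * _]mulrC.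
Qed.

Lemma arc_gap y z u m eta : arc u y z -> t0 <= u -> 0 < eta <= m ->
  (forall q, `|e q u| <= m) -> (forall t, u <= t <= u + T -> `|e y t| <= m - eta) ->
  exists2 t, u <= t <= u + T & `|e z t| <= m - eta * recovery_rate D dl T.
Proof.
move=> yz t0u etam eu ey; have [h [h_le hi hmass]] := arc_minorant t0u yz.
apply: (drift_gap t0u T_gt0 etam dl_gt0 eu hi hmass).
move=> theta sg t /andP[theta0 theta_eta] sg1 /andP[ut tT] Zt near.
have t0t : t0 <= t by rewrite (le_trans t0u) // ltW.
have bounded l : `|e l t| <= m by apply: (max_norm_nonincreasing t0u eu); exact: ltW.
have gap : 0 <= m - theta <= sg * e z t.
  by rewrite near andbT subr_ge0 (le_trans theta_eta) //; case/andP: etam.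
have eyt : `|e y t| <= m - eta by apply: ey; rewrite ltW.
have := drift_le_arc t0t Zt sg1 bounded eyt gap.
have [ht0 hta] := andP (h_le t).
have : (eta - theta) * h t <= eta * `|a z y t|.
  by apply: ler_pM => //; rewrite ?subr_ge0 //; lra.
lra.
Qed.

Section Spreading.
Variable n0 : nat.
Hypothesis horizon_le : N%:R * T <= n0%:R * h0.

Let rho_pin := recovery_rate D kappa T / 2 ^+ n0.
Let rho_arc := recovery_rate D dl T / 2 ^+ n0.

Let rhoP x : 0 < x -> 0 < recovery_rate D x T / 2 ^+ n0 <= 1.
Proof.
move=> x0; have [r0 r1 _] := recovery_rateP D_ge0 x0 T_gt0.
have p2 : 1 <= 2 ^+ n0 :> R by rewrite exprn_ege1 //; lra.
rewrite divr_gt0 ?exprn_gt0 //= ler_pdivrMr ?exprn_gt0 // mul1r.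
exact: le_trans r1 p2.
Qed.

Lemma gap_to_horizon s u q m theta : t0 <= s -> s <= u -> 0 <= theta ->
  (forall p, `|e p s| <= m) -> `|e q u| <= m - theta ->
  forall t, u <= t <= s + N%:R * T -> `|e q t| <= m - theta / 2 ^+ n0.
Proof.
move=> t0s su theta0 es equ t /andP[ut th].
apply: (gap_decay t0s su theta0 es equ); rewrite ut /=; have := horizon_le; lra.
Qed.

Definition settled (s m theta : R) (r : nat) (Ls : {set 'I_N}) :=
  forall q t, q \in Ls -> s + r%:R * T <= t <= s + N%:R * T -> `|e q t| <= m - theta.

Lemma settled_weaken s m theta theta' r r' (Ls : {set 'I_N}) : theta' <= theta -> (r <= r')%N ->
  settled s m theta r Ls -> settled s m theta' r' Ls.
Proof.
move=> th rr' set_r q t qL /andP[rt tN]; apply: le_trans (set_r q t qL _) _; last lra.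
by rewrite tN andbT (le_trans _ rt) // lerD2l ler_wpM2r ?ler_nat // ltW.
Qed.

Lemma settled_pinned s m : t0 <= s -> 0 < m -> (forall p, `|e p s| <= m) ->
  settled s m (m * rho_pin) 1 S.
Proof.
move=> t0s m0 es q t qS /andP[sTt tN].
have [u /andP[su uT] equ] := pinned_gap qS t0s m0 es.
have [r0 _ _] := recovery_rateP D_ge0 kappa_gt0 T_gt0.
rewrite /rho_pin mulrA; apply: (gap_to_horizon t0s su _ es equ).
  by rewrite mulr_ge0 // ltW.
by rewrite tN (le_trans uT) // -[T]mul1r.
Qed.

Lemma settled_extend s m theta r (Ls : {set 'I_N}) v : t0 <= s -> 0 < theta <= m ->
  (forall p, `|e p s| <= m) -> (r.+2 <= N)%N -> S \subset Ls -> v \notin Ls ->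
  settled s m theta r.+1 Ls -> exists2 z, z \notin Ls & settled s m (theta * rho_arc) r.+2 (z |: Ls).
Proof.
move=> t0s /andP[theta0 thetam] es rN SL vL set_r.
pose w := s + r.+1%:R * T.
have sw : s <= w by rewrite lerDl mulr_ge0 // ltW.
have wT : w + T = s + r.+2%:R * T by rewrite -addrA -[in RHS]natr1 mulrDl mul1r.
have wTN : w + T <= s + N%:R * T by rewrite wT lerD2l ler_wpM2r ?ler_nat // ltW.
have [r0 r0S path] := S_root (le_trans t0s sw) v.
have [y [z [yL zL yz]]] := dpath_exit path (fintype.subsetP SL r0 r0S) vL.
have ey t : w <= t <= w + T -> `|e y t| <= m - theta.
  by move=> /andP[wt tT]; apply: set_r => //; rewrite wt (le_trans tT).
have ew p : `|e p w| <= m by exact: (max_norm_nonincreasing t0s es p sw).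
have theta_m : 0 < theta <= m by rewrite theta0.
have [u /andP[wu uT] ezu] := arc_gap yz (le_trans t0s sw) theta_m ew ey.
have [rate0 rate1 _] := recovery_rateP D_ge0 dl_gt0 T_gt0.
have [rho0 rho1] := andP (rhoP dl_gt0).
exists z => // q t; rewrite in_setU1 => /predU1P[->|qL] ht.
  rewrite /rho_arc mulrA; apply: (gap_to_horizon t0s (le_trans sw wu) _ es ezu).
    by rewrite mulr_ge0 // ltW.
  by case/andP: ht => rt ->; rewrite andbT (le_trans uT) // wT.
apply: (settled_weaken _ _ set_r) => //; rewrite ger_pMr //.
Qed.

Lemma contraction_factorP n : 0 < rho_pin * rho_arc ^+ n <= 1.
Proof.
have [rho_pin0 rho_pin1] := andP (rhoP kappa_gt0).
have [rho_arc0 rho_arc1] := andP (rhoP dl_gt0).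
rewrite mulr_gt0 ?exprn_gt0 //= mulr_ile1 ?exprn_ge0 ?exprn_ile1 // ltW //.
Qed.

Lemma settled_spread s m (q : 'I_N) : t0 <= s -> 0 < m -> (forall p, `|e p s| <= m) ->
  forall r, (r < N)%N -> exists Ls : {set 'I_N},
    [/\ (r < #|Ls|)%N, S \subset Ls & settled s m (m * rho_pin * rho_arc ^+ r) r.+1 Ls].
Proof.
move=> t0s m0 es; elim=> [_|r IH rN].
  exists S; split => //; last by rewrite expr0 mulr1; exact: settled_pinned.
  by have [r0 r0S _] := S_root t0s q; rewrite card_gt0; apply/set0Pn; exists r0.
have [Ls [rL SL set_r]] := IH (ltnW rN).
have [c0 c1] := andP (contraction_factorP r).
have theta_m : 0 < m * rho_pin * rho_arc ^+ r <= m.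
  by rewrite -mulrA mulr_gt0 //= ler_piMr // ltW.
have [/existsP[v vL]|/existsPn full] := boolP [exists v, v \notin Ls].
  have [z zL set_z] := settled_extend t0s theta_m es rN SL vL set_r.
  exists (z |: Ls); split; last by rewrite exprSr mulrA.
    by rewrite cardsU1 zL.
  exact: fintype.subset_trans SL (finset.subsetUr _ _).
exists Ls; split => //.
  have -> : Ls = [set: 'I_N]%SET by apply/setP => x; rewrite inE; apply/negbNE/full.
  by rewrite cardsT card_ord.
have [rho0 rho1] := andP (rhoP dl_gt0).
apply: settled_weaken set_r => //; rewrite exprSr mulrA ler_piMr //.
by rewrite -mulrA ltW // mulr_gt0.
Qed.

Lemma contraction s m : t0 <= s -> 0 <= m -> (forall p, `|e p s| <= m) ->
  forall q, `|e q (s + N%:R * T)| <= m * (1 - rho_pin * rho_arc ^+ N.-1).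
Proof.
move=> t0s m0 es q.
have sN : s <= s + N%:R * T by rewrite lerDl mulr_ge0 // ltW.
have [m_eq0|m_neq0] := eqVneq m 0.
  by rewrite m_eq0 mul0r in es *; exact: (max_norm_nonincreasing t0s es q sN).
have m_pos : 0 < m by rewrite lt_def m_neq0 m0.
have N0 : (0 < N)%N := leq_ltn_trans (leq0n q) (ltn_ord q).
have NN : (N.-1 < N)%N by rewrite ltn_predL.
have [Ls [NLs _ set_N]] := settled_spread q t0s m_pos es NN.
rewrite prednK // in NLs.
have LsT : Ls = [set: 'I_N]%SET.
  by apply/eqP; rewrite eqEcard finset.subsetT cardsT card_ord.
rewrite mulrBr mulr1 mulrA; apply: set_N; first by rewrite LsT finset.in_setT.
by rewrite prednK // lexx.
Qed.

End Spreading.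

Lemma error_geometric_decay : exists2 c, 0 < c <= 1 &
  forall n q t, t0 + n%:R * (N%:R * T) <= t ->
    `|e q t| <= (\big[Num.max/0]_p `|e p t0|) * (1 - c) ^+ n.
Proof.
have [n0 horizon] := exists_nat_mul_ge (N%:R * T) h0_gt0.
pose c := recovery_rate D kappa T / 2 ^+ n0 * (recovery_rate D dl T / 2 ^+ n0) ^+ N.-1.
have c01 : 0 < c <= 1 := contraction_factorP n0 N.-1.
exists c => //; have [_ c1] := andP c01.
have M_ge0 : 0 <= \big[Num.max/0]_p `|e p t0| by exact: bigmax_ge_id.
elim=> [|n IH] q t.
  rewrite mul0r addr0 expr0 mulr1 => t0t.
  by apply: (max_norm_nonincreasing (lexx t0) _ q t0t) => p; exact: le_bigmax.
set s := t0 + n%:R * (N%:R * T).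
have t0s : t0 <= s by rewrite lerDl !mulr_ge0 // ltW.
have sN : s <= s + N%:R * T by rewrite lerDl mulr_ge0 // ltW.
have Mn0 : 0 <= (\big[Num.max/0]_p `|e p t0|) * (1 - c) ^+ n.
  by rewrite mulr_ge0 // exprn_ge0 // subr_ge0.
have step := contraction horizon t0s Mn0 (fun p => IH p s (lexx s)).
rewrite -natr1 mulrDl mul1r addrA -/s exprSr mulrA => st.
exact: (max_norm_nonincreasing (le_trans t0s sN) step q st).
Qed.

End ErrorDynamics.

Lemma cvg_col_geometric (R : realType) n (f : R -> 'cV[R]_n) (l : 'cV[R]_n)
    (t0 P M c : R) : 0 < P -> 0 < c <= 1 ->
  (forall (j : nat) i t, t0 + j%:R * P <= t -> `|f t i ord0 - l i ord0| <= M * (1 - c) ^+ j) ->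
  f t @[t --> +oo] --> l.
Proof.
move=> P0 /andP[c0 c1] decay; apply/cvgrPdist_le => eps eps0.
have q1 : `|1 - c| < 1 by rewrite ger0_norm ?subr_ge0 //; lra.
have : (fun j => M * (1 - c) ^+ j) @ \oo --> M * 0.
  by apply: cvgM; [exact: cvg_cst | exact: cvg_expr].
rewrite mulr0 => /cvgrPdist_le /(_ eps eps0) [j _ small].
have Mj : M * (1 - c) ^+ j <= eps.
  by have := small j (leqnn j); rewrite /= sub0r normrN; apply: le_trans (ler_norm _).
exists (t0 + j%:R * P); split; first by rewrite num_real.
move=> t /ltW tj; rewrite -[X in X <= _]/(mx_norm (l - f t)) mx_normrE.
apply: bigmax_le => [|[i i'] _]; first exact: ltW.
by rewrite (ord1 i') /= !mxE distrC; apply: le_trans Mj; exact: decay.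
Qed.

Section ClosedLoop.
Variables (R : realType) (N : nat) (a : 'I_N -> 'I_N -> R -> R) (k : 'I_N -> R -> R).
Local Notation mu := (@lebesgue_measure R).

Lemma signed_laplacian_mulE t i (y : 'I_N -> R) : a i i t = 0 ->
  \sum_j signed_laplacian a t i j * y j = (\sum_l `|a i l t|) * y i - \sum_j a i j t * y j.
Proof.
move=> aii; rewrite (bigD1 i) //= [X in _ = _ - X](bigD1 i) //= aii mul0r add0r.
rewrite /signed_laplacian mxE eqxx; congr (_ + _).
rewrite -sumrN; apply: eq_bigr => j ji; rewrite mxE eq_sym (negbTE ji).
by rewrite mulNr.
Qed.

Lemma gain_matrix_mulE t i (y : 'I_N -> R) : \sum_j gain_matrix k t i j * y j = k i t * y i.
Proof.
rewrite (bigD1 i) //= big1 ?addr0; first by rewrite /gain_matrix !mxE eqxx mulr1n.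
by move=> j ji; rewrite /gain_matrix !mxE eq_sym (negbTE ji) mulr0n mul0r.
Qed.

Lemma closed_loop_rhsE (xd : 'cV[R]_N) (x : R -> 'cV[R]_N) t i : a i i t = 0 ->
  let err j := x t j ord0 - xd j ord0 in
  closed_loop_rhs a k xd x t i ord0 =
    - (\sum_l `|a i l t|) * err i + \sum_l a i l t * err l - k i t * err i.
Proof.
move=> aii err; rewrite /closed_loop_rhs /control !mxE.
rewrite (signed_laplacian_mulE (fun j => x t j ord0) aii).
rewrite (signed_laplacian_mulE (fun j => xd j ord0) aii).
have -> : \sum_j gain_matrix k t i j * (x t - xd) j ord0 = k i t * err i.
  by rewrite -gain_matrix_mulE; apply: eq_bigr => j _; rewrite !mxE.
have -> : \sum_l a i l t * err l = \sum_l a i l t * x t l ord0 - \sum_l a i l t * xd l ord0.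
  by rewrite -sumrB; apply: eq_bigr => l _; rewrite /err; ring.
rewrite /err; ring.
Qed.

Lemma bounded_off_null_set (M0 : R) : A1 a -> 0 <= M0 ->
  (forall i j t1 t2, 0 <= t1 -> t1 <= t2 ->
     (\int[mu]_(s in `[t1, t2[) (`|a i j s|)%:E <= (M0 * (t2 - t1))%:E)%E) ->
  exists Z : set R, [/\ measurable (Z : set (measurableTypeR R)), mu Z = 0%E &
    forall t, 0 <= t -> ~ Z t -> forall i l, `|a i l t| <= M0].
Proof.
move=> discont M0_ge0 mean.
have [Z [mZ Z0 coverZ]] := negligible_finite_union (fun p : 'I_N * 'I_N => discont p.1 p.2).
exists Z; split => // t t_ge0 Zt i l; apply: norm_le_of_mean_le => //; last first.
  by move=> v tv; exact: mean.
by apply: contrapT => disc; apply: Zt; apply: coverZ; exists (i, l).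
Qed.

Lemma delta_arc_minorant (delta T t : R) y z : 0 < delta -> 0 < T ->
  (\int[mu]_(s in `[t, (t + T)%R[) (`|a z y s|)%:E < +oo)%E ->
  delta_arc a delta t (t + T) y z ->
  exists h : R -> R, [/\ forall s, 0 <= h s <= `|a z y s|,
    mu.-integrable `]t, t + T] (EFin \o h) & delta / 2 * T <= \int[mu]_(s in `]t, t + T]) h s].
Proof.
rewrite /delta_arc addrAC subrr add0r => delta0 T0 finite arc.
apply: exists_integrable_minorant => //; apply: lt_le_trans arc.
by rewrite lte_fin ltr_pM2r //; lra.
Qed.

End ClosedLoop.

Unset Implicit Arguments.
Set Strict Implicit.

Theorem theorem1 (R : realType) (N : nat) (a : 'I_N -> 'I_N -> R -> R)
  (delta T t0 : R) (S : {set 'I_N}) (k : 'I_N -> R -> R)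
  (xd : 'cV[R]_N) (x : R -> 'cV[R]_N) :
  (2 <= N)%N -> 0 <= t0 -> 0 < delta ->
  A1 a -> A2 a -> A3 a ->
  uqs_connected a delta T ->
  root_node_set a delta T S ->
  persistently_balanced a S ->
  P1 k t0 -> P2 k S t0 ->
  caratheodory_solution a k xd t0 x ->
  x t @[t --> +oo] --> xd.
Proof.
move=> N2 t0_ge0 delta_gt0 discont no_loops [M0 [M0_gt0 mean]] [T_gt0 _] S_root _ _
  [kappa [kappa_gt0 gains]] sol.
have [Z [mZ Z0 a_bounded]] := bounded_off_null_set discont (ltW M0_gt0) mean.
have k_ge0 i t : t0 <= t -> 0 <= k i t.
  move=> t0t; have [pinned free] := gains t i t0t.
  by case: (boolP (i \in S)) => [/pinned|/free ->] //; apply: le_trans (ltW kappa_gt0).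
have e_integral i t : t0 <= t -> x t i ord0 - xd i ord0 =
    x t0 i ord0 - xd i ord0 + Rintegral lebesgue_measure `[t0, t]
      (fun s => closed_loop_rhs a k xd x s i ord0).
  by move=> t0t; rewrite (sol t i t0t).2 addrAC.
have half_delta : 0 < delta / 2 by lra.
have window t : t <= t + T by rewrite lerDl ltW.
have [c c01 decay] := error_geometric_decay
  (g := fun i t => closed_loop_rhs a k xd x t i ord0) (ltW M0_gt0) mZ Z0
  (fun t t0t => a_bounded t (le_trans t0_ge0 t0t)) k_ge0
  (fun i t => closed_loop_rhsE k xd x (no_loops i t)) (fun i t t0t => (sol t i t0t).1)
  e_integral kappa_gt0 T_gt0 half_delta (fun i t iS t0t => (gains t i t0t).1 iS)
  (fun t t0t => S_root t (le_trans t0_ge0 t0t))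
  (fun t y z t0t => delta_arc_minorant delta_gt0 T_gt0
     (le_lt_trans (mean z y t _ (le_trans t0_ge0 t0t) (window t)) (ltry _))).
have P_gt0 : 0 < N%:R * T by rewrite mulr_gt0 // ltr0n (leq_trans _ N2).
exact: cvg_col_geometric P_gt0 c01 decay.
Qed.
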